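(* Let $G$ be a nontrivial finite abelian $p$-group ($p$ any prime). Then $G$ has a unique minimal nontrivial characteristic subgroup (i.e. the set of nontrivial characteristic subgroups of $G$ has a least element under inclusion). *)

From mathcomp Require Import all_boot fingroup morphism automorphism pgroup.

From mathcomp Require Import all_boot fingroup morphism automorphism pgroup.
From mathcomp Require Import gproduct cyclic nilpotent abelian.
Set Implicit Arguments.
Unset Strict Implicit.
Unset Printing Implicit Defensive.
Local Open Scope group_scope.

(* If p^(n+1) is the exponent of G, then 'Mho^n(G) is generated by the
   elements y^(#[y]/p) with #[y] maximal; we show each of them lies in every
   nontrivial characteristic subgroup K. Split G = <y> x B. A nontrivial
   k in K either lies in <y>, or has a nontrivial component c^m on a cyclic
   direct factor <c> of B; the automorphism sending c to c * y^(#[y]/#[c]) and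
   fixing a complement of <c> then moves k by a nontrivial element of <y>.
   Either way K meets the cyclic p-group <y> nontrivially, hence contains its
   subgroup of order p, generated by y^(#[y]/p). *)

Section AbelianCharacteristic.

Variable gT : finGroupType.

Lemma cycle_pgroup_meet_pdiv (p : nat) (y : gT) (K : {group gT}) :
  prime p -> p.-elt y -> K :&: <[y]> != 1 -> y ^+ (#[y] %/ p) \in K.
Proof.
move=> p_pr p_y ntKy.
have pKy : p.-group (K :&: <[y]>) := pgroupS (subsetIr _ _) p_y.
have [_ p_dv_Ky _] := pgroup_pdiv pKy ntKy.
have [z Kyz oz] := Cauchy p_pr p_dv_Ky.
have [Kz yz] := setIP Kyz.
have p_dv_y : p %| #[y] by rewrite -oz; apply: cardSg; rewrite cycle_subG.
have : <[z]>%G \in [set H : {group gT} | H \subset <[y]> & #|H| == p].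
  by rewrite inE cycle_subG yz -orderE oz eqxx.
rewrite cycle_sub_group // => /set1P/(congr1 val)/= z_y.
have sKz : <[z]> \subset K by rewrite cycle_subG.
by rewrite (subsetP sKz) // z_y cycle_id.
Qed.

Lemma abelian_dprod_cycle_mulg (G C : {group gT}) (x g : gT) :
  abelian G -> <[x]> \x C = G -> g \in C -> #[g] %| #[x] ->
  #[x * g] = #[x] /\ <[x * g]> \x C = G.
Proof.
move=> cGG defG Cg dv_gx.
have [_ defxC cCx tixC] := dprodP defG.
have sCG : C \subset G by rewrite -defxC mulG_subr.
have Gx : x \in G by rewrite -defxC (subsetP (mulG_subl _ _)) ?cycle_id.
have cxg : commute x g by apply: (centsP cGG) => //; apply: (subsetP sCG).
have expC1 m : (x * g) ^+ m \in C -> (x * g) ^+ m = 1 /\ x ^+ m = 1.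
  rewrite expgMn // groupMr => [Cxm|]; last exact: groupX.
  have xm1 : x ^+ m = 1.
    by apply/set1gP; rewrite -tixC inE mem_cycle Cxm.
  have /(dvdn_trans dv_gx) : #[x] %| m by rewrite order_dvdn xm1.
  by rewrite order_dvdn xm1 mul1g => /eqP.
have oxg : #[x * g] = #[x].
  apply/eqP; rewrite eqn_dvd order_dvdn expgMn // expg_order mul1g.
  rewrite -order_dvdn dv_gx /=.
  have [|_ xm1] := expC1 #[x * g]; first by rewrite expg_order group1.
  by rewrite order_dvdn xm1.
have Gxg : x * g \in G by rewrite groupM // (subsetP sCG).
have cCxg : C \subset 'C(<[x * g]>).
  by rewrite centsC cycle_subG (subsetP (centS sCG)) ?(subsetP cGG).
have tixgC : <[x * g]> :&: C = 1.
  apply/trivgP/subsetP => h /setIP[/cycleP[m ->]] Cm.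
  by have [-> _] := expC1 m Cm; rewrite group1.
split=> //; rewrite dprodE //; apply/eqP.
rewrite eqEcard mulG_subG cycle_subG Gxg sCG (TI_cardMg tixgC).
by rewrite /= -orderE oxg orderE (dprod_card defG).
Qed.

Lemma dprod_cycle_exchange_aut (G C : {group gT}) (x u : gT) :
  <[x]> \x C = G -> <[u]> \x C = G -> #[u] = #[x] ->
  exists f : {morphism G >-> gT},
    [/\ 'injm f, f @* G = G, f x = u & {in C, forall w, f w = w}].
Proof.
move=> defGx defGu oux.
have dv_ux : #[u] %| #[x] by rewrite oux.
have [_ _ cCu tiuC] := dprodP defGu.
have cCfu : idm C @* C \subset 'C(eltm dv_ux @* <[x]>).
  by rewrite morphim_idm // im_eltm.
have inj_f : 'injm (dprodm defGx cCfu).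
  rewrite injm_dprodm injm_eltm oux dvdnn ker_idm sub1G /=.
  by rewrite im_eltm morphim_idm // tiuC.
exists (dprodm defGx cCfu); split=> //.
- by rewrite im_dprodm im_eltm morphim_idm //; case/dprodP: defGu.
- by rewrite /= dprodmEl ?cycle_id //= eltm_id.
- by move=> w Cw; rewrite /= dprodmEr.
Qed.

Lemma abelian_cycle_dprod_notin (B : {group gT}) (b : gT) :
  abelian B -> b \in B -> b != 1 ->
  exists c, exists2 C : {group gT}, <[c]> \x C = B & b \notin C.
Proof.
elim: {B}_.+1 {-2}B (ltnSn #|B|) => // n IHn B leBn cBB Bb ntb.
have [c0 Bc0 oc0] := exponent_witness (abelian_nil cBB).
have [C0 /complP[tic0C0 defB]] := splitsP (abelian_splits Bc0 (esym oc0) cBB).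
have sC0B : C0 \subset B by rewrite -defB mulG_subr.
have defB0 : <[c0]> \x C0 = B.
  by rewrite dprodE // (subset_trans sC0B) // centsC cycle_subG (subsetP cBB).
case: (boolP (b \in C0)) => [C0b|]; last by exists c0, C0.
have ltC0B : #|C0| < #|B|.
  rewrite -(dprod_card defB0) -{1}[#|C0|]mul1n ltn_mul2r cardG_gt0 -orderE.
  rewrite ltn_neqAle order_gt0 andbT eq_sym order_eq1; apply: contraNneq ntb.
  move=> c01; have := dvdn_exponent Bb.
  by rewrite oc0 c01 order1 dvdn1 order_eq1.
have cC0C0 : abelian C0 := abelianS sC0B cBB.
have [c [C1 defC0 C1'b]] := IHn C0 (leq_trans ltC0B leBn) cC0C0 C0b ntb.
have [_ defcC1 _ _] := dprodP defC0.
have sC1C0 : C1 \subset C0 by rewrite -defcC1 mulG_subr.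
have cC1c0 : C1 \subset 'C(<[c0]>).
  by rewrite (subset_trans sC1C0) //; case/dprodP: defB0.
have tic0C1 : <[c0]> :&: C1 = 1 by apply/trivgP; rewrite -tic0C0 setIS.
exists c, (<[c0]> <*> C1)%G.
  by rewrite /= -dprodEY // dprodA (dprodC <[c]>) -dprodA defC0.
rewrite /= cent_joinEr //; apply: contra C1'b => c0C1b.
suff <- : C0 :&: (<[c0]> * C1) = C1 by rewrite inE C0b.
by rewrite -group_modr // setIC tic0C0 mul1g.
Qed.

Lemma char_abelian_dprod_transvect (G C K : {group gT}) (c d w : gT) (m : nat) :
  abelian G -> <[c]> \x C = G -> K \char G -> d \in C -> #[d] %| #[c] ->
  w \in C -> c ^+ m * w \in K -> d ^+ m \in K.
Proof.
move=> cGG defG chK Cd dv_dc Cw Kk.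
have [ocd defGcd] := abelian_dprod_cycle_mulg cGG defG Cd dv_dc.
have [f [inj_f im_f fc fC]] := dprod_cycle_exchange_aut defG defGcd ocd.
have [_ defcC _ _] := dprodP defG.
have sCG : C \subset G by rewrite -defcC mulG_subr.
have Gc : c \in G by rewrite -defcC (subsetP (mulG_subl _ _)) ?cycle_id.
have [Gd Gw] := (subsetP sCG d Cd, subsetP sCG w Cw).
have fk : f (c ^+ m * w) = c ^+ m * w * d ^+ m.
  rewrite morphM ?groupX // morphX // fc fC // expgMn; last first.
    exact: (centsP cGG).
  by rewrite -!mulgA (centsP cGG w Gw (d ^+ m)) ?groupX.
have fK : f @* K = K by case/charP: chK => _; apply.
have Kfk : f (c ^+ m * w) \in K.
  by rewrite -fK mem_morphim // (subsetP (char_sub chK)).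
by rewrite -(mulKg (c ^+ m * w) (d ^+ m)) -fk groupM ?groupV.
Qed.

Lemma char_abelian_meet_cycle_exponent (G K : {group gT}) (y : gT) :
  abelian G -> K \char G -> K :!=: 1 -> y \in G -> #[y] = exponent G ->
  K :&: <[y]> != 1.
Proof.
move=> cGG chK ntK Gy oy.
have [B /complP[tiyB defyB]] := splitsP (abelian_splits Gy oy cGG).
have sBG : B \subset G by rewrite -defyB mulG_subr.
have defG : <[y]> \x B = G.
  by rewrite dprodE // (subset_trans sBG) // centsC cycle_subG (subsetP cGG).
have [k Kk ntk] := trivgPn _ ntK.
have [a [b [ya Bb def_k _]]] := mem_dprod defG (subsetP (char_sub chK) k Kk).
have [b1 | ntb] := eqVneq b 1.
  by apply/trivgPn; exists k; rewrite // inE Kk def_k b1 mulg1.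
have [c [C1 defB C1'b]] := abelian_cycle_dprod_notin (abelianS sBG cGG) Bb ntb.
have [c' [g [cc' C1g def_b _]]] := mem_dprod defB Bb.
have /cycleP[m def_c'] := cc'.
have [_ defcC1 _ _] := dprodP defB.
have [sC1B scB] : C1 \subset B /\ <[c]> \subset B.
  by rewrite -defcC1 mulG_subr mulG_subl.
have cC1y : C1 \subset 'C(<[y]>).
  by rewrite (subset_trans sC1B) //; case/dprodP: defG.
have tiyC1 : <[y]> :&: C1 = 1 by apply/trivgP; rewrite -tiyB setIS.
have defG' : <[c]> \x (<[y]> <*> C1) = G.
  by rewrite -dprodEY // dprodA (dprodC <[c]>) -dprodA defB.
have dv_cy : #[c] %| #[y].
  by rewrite oy dvdn_exponent // (subsetP sBG) // (subsetP scB) ?cycle_id.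
have oys : #[y ^+ (#[y] %/ #[c])] = #[c].
  by rewrite orderXdiv ?dvdn_div // divnA // mulKn.
have Kyc : (y ^+ (#[y] %/ #[c])) ^+ m \in K.
  apply: (char_abelian_dprod_transvect (w := a * g) cGG defG' chK).
  - by rewrite mem_gen // inE mem_cycle.
  - by rewrite oys.
  - by rewrite groupM ?mem_gen // inE ?ya ?C1g ?orbT.
  have Ga : a \in G by rewrite (subsetP _ a ya) ?cycle_subG.
  have Gc' : c' \in G := subsetP sBG _ (subsetP scB _ cc').
  by rewrite -def_c' mulgA -(centsP cGG a Ga c' Gc') -mulgA -def_b -def_k.
have ntc' : c' != 1 by apply: contraNneq C1'b => c'1; rewrite def_b c'1 mul1g.
apply/trivgPn; exists ((y ^+ (#[y] %/ #[c])) ^+ m).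
  by rewrite inE Kyc !groupX ?cycle_id.
by rewrite -order_dvdn oys order_dvdn -def_c'.
Qed.

Lemma order_eq_exponent (G : {group gT}) (p n : nat) (x : gT) :
  prime p -> x \in G -> exponent G = (p ^ n.+1)%N -> x ^+ (p ^ n) != 1 ->
  #[x] = exponent G.
Proof.
move=> p_pr Gx expG ntx.
have oxpn : #[x ^+ (p ^ n)] = p.
  apply/(prime_nt_dvdP p_pr); first by rewrite order_eq1.
  by rewrite order_dvdn -expgM -expnSr -expG expg_exponent.
by rewrite expG expnSr -(orderXpfactor oxpn p_pr (dvdnn p)).
Qed.

End AbelianCharacteristic.

Theorem mainTheorem13 (gT : finGroupType) (G : {group gT}) (p : nat) :
  prime p -> p.-group G -> abelian G -> G :!=: 1 ->
  exists H : {group gT},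
    [/\ H \char G, H :!=: 1 &
        forall K : {group gT}, K \char G -> K :!=: 1 -> H \subset K].
Proof.
move=> p_pr pG cGG ntG.
have [x0 Gx0 ox0] := exponent_witness (abelian_nil cGG).
have [[|n] expG] : {k | exponent G = (p ^ k)%N}.
  by apply/p_natP; rewrite pnat_exponent.
  by case/negP: ntG; rewrite trivg_exponent expG.
exists 'Mho^n(G)%G; split; first exact: Mho_char.
  apply/trivgPn; exists (x0 ^+ (p ^ n)).
    by rewrite /= (MhoE n pG) mem_gen //; apply/imsetP; exists x0.
  by rewrite -order_dvdn -ox0 expG dvdn_Pexp2l ?prime_gt1 // ltnn.
move=> K chK ntK; rewrite /= (MhoE n pG) gen_subG.
apply/subsetP => _ /imsetP[x Gx ->].
have [-> | ntx] := eqVneq (x ^+ (p ^ n)) 1; first exact: group1.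
have ox := order_eq_exponent p_pr Gx expG ntx.
have -> : (p ^ n = #[x] %/ p)%N by rewrite ox expG expnSr mulnK ?prime_gt0.
apply: cycle_pgroup_meet_pdiv p_pr (mem_p_elt pG Gx) _.
exact: char_abelian_meet_cycle_exponent cGG chK ntK Gx ox.
Qed.
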